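(* Let $\Gamma$ be a distance-regular graph with diameter $D\ge 4$ and valency $k$. Assume $a_1=0$ and there exists $i$ with $2\le i\le D-2$ such that $a_i\neq 0$. Then (i) for every $\theta\in\mathbb{R}$ the pair $\theta,k$ is tight; and (ii) $\Gamma$ has no further tight pairs, i.e. if $\theta,\theta'\in\mathbb{R}$ form a tight pair then $\theta=k$ or $\theta'=k$.
   Context: $\Gamma$ is a finite connected undirected graph without loops or multiple edges, distance-regular with diameter $D$, intersection numbers $a_i,b_i,c_i$ ($c_0=0$, $b_D=0$), valency $k=b_0$, $c_i+a_i+b_i=k$. For $\theta\in\mathbb{R}$, the pseudo cosine sequence for $\theta$ is the sequence of reals $\sigma_0,\dots,\sigma_D$ with $\sigma_0=1$ and $c_i\sigma_{i-1}+a_i\sigma_i+b_i\sigma_{i+1}=\theta\sigma_i$ for $0\le i\le D-1$. Two pseudo cosine sequences $\sigma_i$, $\rho_i$ form a tight pair if $(\sigma_i\rho_i)_{i=0}^D$ is a pseudo cosine sequence; reals $\theta,\theta'$ form a tight pair if their pseudo cosine sequences do. *)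

From HB Require Import structures.
From mathcomp Require Import all_boot all_order all_algebra.
From mathcomp Require Import reals.
Set Implicit Arguments. Unset Strict Implicit. Unset Printing Implicit Defensive.
Import Order.TTheory GRing.Theory Num.Theory.

Section Graph.
Variable T : finType.
Variable e : rel T.

Definition nbhd (A : {set T}) : {set T} := A :|: [set y | [exists x in A, e x y]].

Definition gball (x : T) (n : nat) : {set T} := iter n nbhd [set x].

(* graph distance: least n with y in gball x n (n ranges over 0..#|T|-1,
   which suffices in a connected graph) *)
Definition gdist (x y : T) : nat := find (fun n => y \in gball x n) (iota 0 #|T|).

Definition distance_regular (D : nat) (a b c : nat -> nat) : Prop :=
  [/\ symmetric e, irreflexive e,
      (forall x y : T, exists n, y \in gball x n),
      (forall x y : T, gdist x y <= D)%N /\ (exists x y : T, gdist x y = D) &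
      forall x y : T,
        [/\ #|[set z | e y z & (gdist x z).+1 == gdist x y]| = c (gdist x y),
            #|[set z | e y z & gdist x z == gdist x y]| = a (gdist x y) &
            #|[set z | e y z & gdist x z == (gdist x y).+1]| = b (gdist x y)]].
End Graph.

Local Open Scope ring_scope.

Definition pseudo_cosine (R : realType) (D : nat) (a b c : nat -> nat)
    (theta : R) (s : nat -> R) : Prop :=
  s 0%N = 1 /\
  forall i : nat, (i < D)%N ->
    (c i)%:R * s i.-1 + (a i)%:R * s i + (b i)%:R * s i.+1 = theta * s i.

Definition tight_pair (R : realType) (D : nat) (a b c : nat -> nat)
    (theta theta' : R) : Prop :=
  exists (s r : nat -> R) (eta : R),
    [/\ pseudo_cosine D a b c theta s, pseudo_cosine D a b c theta' r &
        pseudo_cosine D a b c eta (fun i => s i * r i)].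

From HB Require Import structures.
From mathcomp Require Import all_boot all_order all_algebra.
From mathcomp Require Import reals.
From mathcomp Require Import zify.
From mathcomp.algebra_tactics Require Import ring lra.
Set Implicit Arguments. Unset Strict Implicit. Unset Printing Implicit Defensive.

(* For every theta, the constant sequence 1 is the pseudo cosine sequence of k
   and multiplying by it changes nothing, so theta, k is tight.  Conversely let
   s, r and s r be pseudo cosine sequences for theta, theta' and eta.  Since
   c_1 = 1, a_1 = 0 and b_1 = k - 1, the recurrences at i = 0, 1 give
   k (1 - s_1^2) (1 - r_1^2) = 0; by symmetry s_1 = 1 (so theta = k) or
   s_1 = -1.  In the latter case theta = -k, eta = -theta' and s_i = (-1)^i up
   to the first j with a_j <> 0.  The recurrences at j force r_(j+1) = r_j,
   and those at j + 1 then give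
     r_j (s_j s_(j+1) (2 a_(j+1) + c_(j+1)) + c_(j+1)) (k - theta') = 0,
   whose middle factor is nonzero because b_j s_j s_(j+1) = -(2 a_j + b_j).
   A pseudo cosine sequence has no two consecutive zeros, so theta' = k. *)

Section GraphDistance.
Variables (T : finType) (e : rel T).
Hypothesis e_connected : forall x y : T, exists n, y \in gball e x n.

Lemma gballS x n : gball e x n.+1 = nbhd e (gball e x n).
Proof. by []. Qed.

Lemma gball_sub x m n : (m <= n)%N -> gball e x m \subset gball e x n.
Proof.
move=> /subnKC <-; elim: (n - m)%N => [|d IH]; first by rewrite addn0.
by rewrite addnS gballS; apply: subset_trans IH (subsetUl _ _).
Qed.

Lemma gball_grows_or_stops x n :
  (n < #|gball e x n|)%N \/ gball e x n.+1 = gball e x n.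
Proof.
elim: n => [|n [IH|IH]]; first by left; rewrite cards1.
- have [E|NE] := eqVneq (gball e x n.+1) (gball e x n).
    by right; rewrite gballS E.
  left; apply: leq_ltn_trans IH (proper_card _).
  by rewrite properEneq eq_sym NE gball_sub.
- by right; rewrite gballS IH.
Qed.

Lemma gball_stationary x n m :
  gball e x n.+1 = gball e x n -> (n <= m)%N -> gball e x m = gball e x n.
Proof.
move=> Hn /subnKC <-; elim: (m - n)%N => [|d IH]; first by rewrite addn0.
by rewrite addnS gballS IH -gballS.
Qed.

Lemma mem_gball_card x y : y \in gball e x #|T|.-1.
Proof.
have [m Hm] := e_connected x y.
have [Hcard|Hstop] := gball_grows_or_stops x #|T|.-1.
  suff -> : gball e x #|T|.-1 = setT by rewrite inE.
  by apply/eqP; rewrite eqEcard subsetT cardsT; move: Hcard; case: #|T|.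
have [le_m|lt_m] := leqP m #|T|.-1; first exact: subsetP (gball_sub x le_m) _ Hm.
by rewrite -(gball_stationary Hstop (ltnW lt_m)).
Qed.

Lemma gdist_le x y n : (gdist e x y <= n)%N = (y \in gball e x n).
Proof.
set P := fun n => y \in gball e x n.
have T_gt0 : (0 < #|T|)%N by apply/card_gt0P; exists x.
have hasP : has P (iota 0 #|T|).
  apply/hasP; exists #|T|.-1; last exact: mem_gball_card.
  by rewrite mem_iota; lia.
have lt_T : (gdist e x y < #|T|)%N by move: hasP; rewrite has_find size_iota.
apply/idP/idP => [le_n|Pn].
  have := nth_find 0 hasP; rewrite nth_iota // add0n.
  exact: subsetP (gball_sub x le_n) _.
rewrite leqNgt; apply/negP => lt_n.
by have := before_find 0 lt_n; rewrite nth_iota ?add0n /P ?Pn //; lia.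
Qed.

Lemma gdist_eq0 x y : (gdist e x y == 0)%N = (y == x).
Proof. by rewrite -leqn0 gdist_le inE. Qed.

Lemma gdistxx x : gdist e x x = 0%N.
Proof. by apply/eqP; rewrite gdist_eq0. Qed.

Lemma gdist_adj x y z : e y z -> (gdist e x z <= (gdist e x y).+1)%N.
Proof.
move=> yz; rewrite gdist_le gballS /nbhd !inE; apply/orP; right.
by apply/existsP; exists y; rewrite -gdist_le leqnn.
Qed.

Lemma gdist_pred x z m :
  gdist e x z = m.+1 -> exists2 y, e y z & gdist e x y = m.
Proof.
move=> dz; have : z \in gball e x m.+1 by rewrite -gdist_le dz.
rewrite gballS /nbhd !inE => /orP[|/existsP[y /andP[y_in yz]]].
  by rewrite -gdist_le dz ltnn.
exists y => //; move: y_in; rewrite -gdist_le.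
by have := gdist_adj x yz; lia.
Qed.

Lemma gdist_intermediate x z n :
  (n <= gdist e x z)%N -> exists y, gdist e x y = n.
Proof.
move dz: (gdist e x z) => m; elim: m z dz => [|m IH] w dw le_n.
  by exists w; rewrite dw; case: n le_n.
have [->|ne] := eqVneq n m.+1; first by exists w.
have [y _ dy] := gdist_pred dw; apply: (IH y dy); lia.
Qed.
End GraphDistance.

Section DistanceRegular.
Variables (T : finType) (e : rel T) (D : nat) (a b c : nat -> nat).
Hypothesis drg : distance_regular e D a b c.

Let e_sym : symmetric e. Proof. by case: drg. Qed.
Let e_irr : irreflexive e. Proof. by case: drg. Qed.
Let e_conn : forall x y : T, exists n, y \in gball e x n. Proof. by case: drg. Qed.
Let drg_count x y :
  [/\ #|[set z | e y z & (gdist e x z).+1 == gdist e x y]| = c (gdist e x y),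
      #|[set z | e y z & gdist e x z == gdist e x y]| = a (gdist e x y) &
      #|[set z | e y z & gdist e x z == (gdist e x y).+1]| = b (gdist e x y)].
Proof. by case: drg => _ _ _ _; apply. Qed.

Lemma exists_gdist n : (n <= D)%N -> exists x y, gdist e x y = n.
Proof.
case: drg => _ _ _ [_ [x [z dz]]] _ le_n.
have [|y dy] := gdist_intermediate e_conn (x := x) (z := z) (n := n).
  by rewrite dz.
by exists x, y.
Qed.

Lemma exists_gdist_adj m : (m < D)%N ->
  exists x y z, [/\ e y z, gdist e x y = m & gdist e x z = m.+1].
Proof.
move=> lt_m; have [x [z dz]] := exists_gdist lt_m.
by have [y yz dy] := gdist_pred e_conn dz; exists x, y, z.
Qed.

Lemma drg_c0 : c 0 = 0%N.
Proof.
have [x [_ _]] := exists_gdist (leq0n D).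
have := drg_count x x; rewrite (gdistxx e_conn) => -[<- _ _].
by apply/eqP; rewrite cards_eq0; apply/eqP/setP => z; rewrite !inE andbF.
Qed.

Lemma drg_a0 : a 0 = 0%N.
Proof.
have [x [_ _]] := exists_gdist (leq0n D).
have := drg_count x x; rewrite (gdistxx e_conn) => -[_ <- _].
apply/eqP; rewrite cards_eq0; apply/eqP/setP => z; rewrite !inE (gdist_eq0 e_conn).
by have [->|] := eqVneq z x; rewrite ?e_irr ?andbF.
Qed.

Lemma drg_valency y : #|[set z | e y z]| = b 0.
Proof.
have := drg_count y y; rewrite (gdistxx e_conn) => -[_ _ <-].
apply: eq_card => z; rewrite !inE; case yz: (e y z) => //=; apply/esym/eqP.
have := gdist_adj e_conn y yz; rewrite (gdistxx e_conn).
have : gdist e y z != 0%N.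
  by rewrite (gdist_eq0 e_conn); apply: contraTneq yz => ->; rewrite e_irr.
lia.
Qed.

Lemma drg_cab m : (m <= D)%N -> (c m + a m + b m)%N = b 0.
Proof.
move=> le_m; have [x [y dy]] := exists_gdist le_m.
rewrite -(drg_valency y) -dy; have [<- <- <-] := drg_count x y.
rewrite -!sum1_card !(big_mkcond (fun z => z \in _)) -!big_split /=.
apply: eq_bigr => z _; rewrite !inE; case yz: (e y z) => //=.
have := gdist_adj e_conn x yz; have := gdist_adj e_conn x (etrans (e_sym z y) yz).
by case: eqP => ?; case: eqP => ?; case: eqP => ? /=; lia.
Qed.

Lemma drg_b_gt0 m : (m < D)%N -> (0 < b m)%N.
Proof.
move=> lt_m; have [x [y [z [yz dy dz]]]] := exists_gdist_adj lt_m.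
rewrite -dy; have [_ _ <-] := drg_count x y.
by apply/card_gt0P; exists z; rewrite inE yz dz dy eqxx.
Qed.

Lemma drg_c_gt0 m : (m < D)%N -> (0 < c m.+1)%N.
Proof.
move=> lt_m; have [x [y [z [yz dy dz]]]] := exists_gdist_adj lt_m.
rewrite -dz; have [<- _ _] := drg_count x z.
by apply/card_gt0P; exists y; rewrite inE e_sym yz dz dy eqxx.
Qed.

Lemma drg_c1 : (0 < D)%N -> c 1 = 1%N.
Proof.
move=> D_gt0; have [x [y [z [yz /eqP dy dz]]]] := exists_gdist_adj D_gt0.
move: dy yz; rewrite (gdist_eq0 e_conn) => /eqP -> xz.
rewrite -{1}dz; have [<- _ _] := drg_count x z; rewrite -(cards1 x) dz.
apply: eq_card => w; rewrite !inE.
have [->|ne] := eqVneq w x; first by rewrite (gdistxx e_conn) e_sym xz.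
by rewrite eqSS (gdist_eq0 e_conn) (negbTE ne) andbF.
Qed.
End DistanceRegular.

Import Order.TTheory GRing.Theory Num.Theory.
Local Open Scope ring_scope.

Section PseudoCosine.
Variables (R : realType) (D : nat) (a b c : nat -> nat).
Local Notation k := ((b 0)%:R : R).
Local Notation pcos := (pseudo_cosine D a b c).

Hypothesis cab : forall i, (i <= D)%N -> (c i + a i + b i)%N = b 0.
Hypothesis b_gt0 : forall i, (i < D)%N -> (0 < b i)%N.
Hypothesis c_gt0 : forall i, (i < D)%N -> (0 < c i.+1)%N.
Hypotheses (c0 : c 0 = 0%N) (a0 : a 0 = 0%N) (c1 : c 1 = 1%N) (a1 : a 1 = 0%N).

Lemma b_neq0 i : (i < D)%N -> (b i)%:R != 0 :> R.
Proof. by move=> lt_i; rewrite pnatr_eq0 -lt0n b_gt0. Qed.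

Lemma natr_cab i : (i <= D)%N -> (c i)%:R + (a i)%:R + (b i)%:R = k.
Proof. by move=> le_i; rewrite -!natrD cab. Qed.

Lemma eq_pseudo_cosine (th : R) (s s' : nat -> R) :
  s =1 s' -> pcos th s -> pcos th s'.
Proof. by move=> eq_s [s0 Es]; split=> [|i /Es]; rewrite -!eq_s. Qed.

Definition pcos_next (th : R) n (prev cur : R) : R :=
  (th * cur - (c n)%:R * prev - (a n)%:R * cur) / (b n)%:R.

(* At n = 0 the term s_(-1) is read as s_0 = 1, matching [0.-1 = 0] in
   [pseudo_cosine]. *)
Fixpoint pcos_pair (th : R) n : R * R :=
  if n is m.+1 then let p := pcos_pair th m in (p.2, pcos_next th m.+1 p.1 p.2)
  else (1, pcos_next th 0 1 1).

Definition pcos_seq (th : R) n : R := (pcos_pair th n).1.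

Lemma pseudo_cosine_seq th : pcos th (pcos_seq th).
Proof.
split=> // -[|i] lt_i; rewrite /pcos_seq /= /pcos_next;
  by rewrite [_ * (_ / _)]mulrC divfK ?b_neq0 //; ring.
Qed.

Lemma pseudo_cosine_valency : pcos k (fun=> 1).
Proof. by split=> // i lt_i; rewrite !mulr1 natr_cab // ltnW. Qed.

Lemma tight_pair_valency th : tight_pair D a b c th k.
Proof.
exists (pcos_seq th), (fun=> 1), th; split; [exact: pseudo_cosine_seq|
  exact: pseudo_cosine_valency|].
by apply: eq_pseudo_cosine (pseudo_cosine_seq th) => i; rewrite mulr1.
Qed.

Lemma pseudo_cosine1 (th : R) (s : nat -> R) :
  (0 < D)%N -> pcos th s -> th = k * s 1%N.
Proof.
move=> D_gt0 [s0 Es]; have := Es 0%N D_gt0.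
by rewrite /= c0 a0 s0 !mul0r !add0r mulr1 => <-.
Qed.

Lemma pseudo_cosine2 (th : R) (s : nat -> R) :
  (1 < D)%N -> pcos th s -> (b 1)%:R * s 2%N = k * s 1%N ^+ 2 - 1.
Proof.
move=> D_gt1 Ps; have [s0 Es] := Ps; have := Es 1%N D_gt1.
rewrite /= c1 a1 s0 (pseudo_cosine1 (ltnW D_gt1) Ps) => E.
by rewrite expr2 mulrA -E; ring.
Qed.

Lemma tight_sq1 (th th' eta : R) (s r : nat -> R) :
  (1 < D)%N -> pcos th s -> pcos th' r -> pcos eta (fun i => s i * r i) ->
  s 1%N ^+ 2 = 1 \/ r 1%N ^+ 2 = 1.
Proof.
move=> D_gt1 Ps Pr Psr.
have b1 : (b 1)%:R = k - 1 :> R by rewrite -(natr_cab (ltnW D_gt1)) c1 a1; ring.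
have Es := pseudo_cosine2 D_gt1 Ps; have Er := pseudo_cosine2 D_gt1 Pr.
have Esr := pseudo_cosine2 D_gt1 Psr.
have : k * ((1 - s 1%N ^+ 2) * (1 - r 1%N ^+ 2)) = 0.
  have -> : k * ((1 - s 1%N ^+ 2) * (1 - r 1%N ^+ 2)) =
    (k * s 1%N ^+ 2 - 1) * (k * r 1%N ^+ 2 - 1) -
    (k - 1) * (k * (s 1%N * r 1%N) ^+ 2 - 1) by ring.
  by rewrite -Es -Er -Esr -b1; ring.
move/eqP; rewrite mulf_eq0 (negbTE (b_neq0 (ltnW D_gt1))) mulf_eq0 !subr_eq0 /=.
by case/orP => /eqP <-; [left | right].
Qed.

Lemma pseudo_cosine_succ_neq0 (th : R) (r : nat -> R) m :
  pcos th r -> (m < D)%N -> r m = 0 -> r m.+1 != 0.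
Proof.
move=> [r0 Er]; elim: m => [|m IH] lt_m rm.
  by have := oner_neq0 R; rewrite -r0 rm eqxx.
apply/eqP => rm2; suff /(IH (ltnW lt_m)) : r m = 0 by rewrite rm eqxx.
have := Er m.+1 lt_m; rewrite /= rm rm2 !mulr0 !addr0 => /eqP.
by rewrite mulf_eq0 pnatr_eq0 eqn0Ngt (c_gt0 (ltnW lt_m)) => /eqP.
Qed.

Lemma pseudo_cosine_alternating (s : nat -> R) j :
  pcos (- k) s -> (j <= D)%N -> (forall i, (i < j)%N -> a i = 0%N) ->
  forall i, (i <= j)%N -> s i = (-1) ^+ i.
Proof.
move=> [s0 Es] le_j a_j; suff alt : forall i, (i <= j)%N ->
    s i = (-1) ^+ i /\ (c i)%:R * s i.-1 = - (c i)%:R * s i by move=> i /alt[].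
elim=> [|i IH] lt_i; first by rewrite s0 c0; split; ring.
have [si ci] := IH (ltnW lt_i); have lt_iD : (i < D)%N by apply: leq_trans le_j.
have {}si1 : s i.+1 = - s i.
  apply: (mulfI (b_neq0 lt_iD)); have := Es i lt_iD.
  rewrite ci -(natr_cab (ltnW lt_iD)) a_j //; lra.
by rewrite si1 si exprS /=; split; ring.
Qed.

Definition pcos_residual (th : R) (s : nat -> R) i : R :=
  (c i)%:R * s i.-1 + (a i)%:R * s i + (b i)%:R * s i.+1 - th * s i.

Lemma pseudo_cosine_residual (th : R) (s : nat -> R) i :
  pcos th s -> (i < D)%N -> pcos_residual th s i = 0.
Proof. by move=> [_ Es] /Es; rewrite /pcos_residual => ->; rewrite subrr. Qed.

Section OppositeValency.
Variables (s r : nat -> R) (th' : R) (j : nat).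
Hypotheses (Ps : pcos (- k) s) (Pr : pcos th' r).
Hypothesis Psr : pcos (- th') (fun i => s i * r i).
Hypotheses (j_lt : (j.+1 < D)%N) (aj : a j != 0%N).
Hypotheses (s_prev : s j.-1 = - s j) (s_sq : s j ^+ 2 = 1).

Let j_ltD : (j < D)%N. Proof. exact: ltnW. Qed.

Lemma opp_valency_cross :
  (b j)%:R * (s j * s j.+1) = - (2 * (a j)%:R + (b j)%:R).
Proof.
have : (b j)%:R * (s j * s j.+1) + (2 * (a j)%:R + (b j)%:R) =
    s j * pcos_residual (- k) s j.
  by rewrite /pcos_residual s_prev -(natr_cab (ltnW j_ltD)); ring: s_sq.
by rewrite pseudo_cosine_residual // mulr0 => /eqP; rewrite addr_eq0 => /eqP.
Qed.

Lemma opp_valency_flat : r j.+1 = r j.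
Proof.
have : 2 * (a j)%:R * (r j - r j.+1) =
    s j * pcos_residual (- th') (fun i => s i * r i) j + pcos_residual th' r j
    - r j.+1 * ((b j)%:R * (s j * s j.+1) + (2 * (a j)%:R + (b j)%:R)).
  by rewrite /pcos_residual s_prev; ring: s_sq.
rewrite opp_valency_cross !pseudo_cosine_residual // mulr0 add0r addNr mulr0 subr0.
by move/eqP; rewrite !mulf_eq0 !pnatr_eq0 (negbTE aj) subr_eq0 /= => /eqP.
Qed.

Lemma opp_valency_factor :
  let t := s j * s j.+1 in
  r j * (t * (2 * (a j.+1)%:R + (c j.+1)%:R) + (c j.+1)%:R) * (k - th') = 0.
Proof.
move=> t.
(* s_j b_(j+1) times the recurrence of s r at j + 1, after eliminating
   s_j b_(j+1) s_(j+2) and b_(j+1) r_(j+2) with those of s and r. *)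
have : r j * (t * (2 * (a j.+1)%:R + (c j.+1)%:R) + (c j.+1)%:R) * (k - th') =
    s j * (b j.+1)%:R * pcos_residual (- th') (fun i => s i * r i) j.+1
    - s j * pcos_residual (- k) s j.+1 * ((b j.+1)%:R * r j.+2)
    + ((c j.+1)%:R + (a j.+1)%:R * t + k * t) * pcos_residual th' r j.+1.
  rewrite /pcos_residual /= opp_valency_flat /t -(natr_cab (ltnW j_lt)).
  ring: s_sq.
by rewrite !pseudo_cosine_residual // => ->; ring.
Qed.

Lemma opp_valency_factor_neq0 :
  s j * s j.+1 * (2 * (a j.+1)%:R + (c j.+1)%:R) + (c j.+1)%:R != 0.
Proof.
have bj_gt0 : 0 < (b j)%:R :> R by rewrite ltr0n b_gt0.
have aj_gt0 : 0 < (a j)%:R :> R by rewrite ltr0n lt0n.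
have cj1_gt0 : 0 < (c j.+1)%:R :> R by rewrite ltr0n c_gt0.
have aj1_ge0 : 0 <= (a j.+1)%:R :> R by [].
apply/eqP => eq0; suff : (b j)%:R *
    (s j * s j.+1 * (2 * (a j.+1)%:R + (c j.+1)%:R) + (c j.+1)%:R) < 0 :> R.
  by rewrite eq0 mulr0 ltxx.
rewrite mulrDr mulrA opp_valency_cross; nra.
Qed.

Lemma opp_valency_at : r j = 0 \/ th' = k.
Proof.
have := opp_valency_factor; rewrite /= => /eqP.
rewrite !mulf_eq0 (negbTE opp_valency_factor_neq0) orbF subr_eq0.
by case/orP => /eqP; [left | right].
Qed.

End OppositeValency.

Lemma tight_opp_valency (s r : nat -> R) (th' : R) :
  pcos (- k) s -> pcos th' r -> pcos (- th') (fun i => s i * r i) ->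
  (exists i, (i.+1 < D)%N /\ a i <> 0%N) -> th' = k.
Proof.
move=> Ps Pr Psr ex_i.
have ex_a : exists i, a i != 0%N by case: ex_i => i [_ /eqP]; exists i.
case: (ex_minnP ex_a) => j aj min_j.
have j_lt : (j.+1 < D)%N by case: ex_i => i [lt_i /eqP /min_j]; lia.
have j_gt0 : (0 < j)%N by rewrite lt0n; apply: contraNneq aj => ->; rewrite a0.
have a_lt_j i : (i < j)%N -> a i = 0%N.
  by move=> lt_ij; apply/eqP/negP => /negP/min_j; rewrite leqNgt lt_ij.
have alt := pseudo_cosine_alternating Ps (ltnW (ltnW j_lt)) a_lt_j.
have s_prev : s j.-1 = - s j.
  by rewrite (alt _ (leq_pred j)) alt // -{2}(prednK j_gt0) exprS mulN1r opprK.
have s_sq : s j ^+ 2 = 1 by rewrite alt // -exprM mulnC exprM sqrrN !expr1n.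
have [rj0|//] := opp_valency_at Ps Pr Psr j_lt aj s_prev s_sq.
have := pseudo_cosine_succ_neq0 Pr (ltnW j_lt) rj0.
by rewrite (opp_valency_flat Ps Pr Psr j_lt aj s_prev s_sq) rj0 eqxx.
Qed.

Lemma tight_valency_of_sq1 (th th' eta : R) (s r : nat -> R) :
  pcos th s -> pcos th' r -> pcos eta (fun i => s i * r i) ->
  (exists i, (i.+1 < D)%N /\ a i <> 0%N) -> s 1%N ^+ 2 = 1 ->
  th = k \/ th' = k.
Proof.
move=> Ps Pr Psr ex_i; have D_gt0 : (0 < D)%N by case: ex_i => i []; lia.
have th_s := pseudo_cosine1 D_gt0 Ps.
move/eqP; rewrite sqrf_eq1 => /orP[/eqP s1 | /eqP s1]; [left | right].
  by rewrite th_s s1 mulr1.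
have eta_th' : eta = - th'.
  by rewrite (pseudo_cosine1 D_gt0 Psr) (pseudo_cosine1 D_gt0 Pr) s1 mulN1r mulrN.
rewrite th_s s1 mulrN1 in Ps; rewrite eta_th' in Psr.
exact: tight_opp_valency Ps Pr Psr ex_i.
Qed.

Lemma tight_pair_valency_or (th th' : R) :
  (exists i, (i.+1 < D)%N /\ a i <> 0%N) ->
  tight_pair D a b c th th' -> th = k \/ th' = k.
Proof.
move=> ex_i [s [r [eta [Ps Pr Psr]]]].
have D_gt1 : (1 < D)%N by case: ex_i => i []; lia.
have Prs : pcos eta (fun i => r i * s i).
  by apply: eq_pseudo_cosine Psr => i; rewrite mulrC.
have [s1|r1] := tight_sq1 D_gt1 Ps Pr Psr.
  exact: tight_valency_of_sq1 Psr ex_i s1.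
by rewrite or_comm; exact: tight_valency_of_sq1 Prs ex_i r1.
Qed.

End PseudoCosine.

Theorem theorem10p1 (R : realType) (T : finType) (e : rel T) (D : nat)
    (a b c : nat -> nat) :
  distance_regular e D a b c ->
  (4 <= D)%N ->
  a 1%N = 0%N ->
  (exists i : nat, (2 <= i <= D - 2)%N /\ a i <> 0%N) ->
  (forall theta : R, tight_pair D a b c theta (b 0%N)%:R) /\
  (forall theta theta' : R, tight_pair D a b c theta theta' ->
     theta = (b 0%N)%:R \/ theta' = (b 0%N)%:R).
Proof.
move=> drg D_ge4 a1 [i [/andP[i_ge2 i_le] ai]].
have cab := drg_cab drg; have b_gt0 := drg_b_gt0 drg.
have D_gt0 : (0 < D)%N by lia.
have ex_i : exists i, (i.+1 < D)%N /\ a i <> 0%N by exists i; split=> //; lia.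
split=> [th | th th']; first exact: tight_pair_valency cab b_gt0 th.
exact: tight_pair_valency_or cab b_gt0 (drg_c_gt0 drg) (drg_c0 drg) (drg_a0 drg)
  (drg_c1 drg D_gt0) a1 th th' ex_i.
Qed.
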